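(* A Hausdorff convergence $\xi$ is strongly countably $\mathrm{S}_0$-characterized if and only if it has countable $\mathrm{S}_0$-character and is strongly sequential.
   Context: A convergence $\xi$ on a set $X$ is a relation between filters and points, $x\in\lim_\xi\mathcal{F}$, isotone in $\mathcal{F}$ with $x\in\lim_\xi\{x\}^\uparrow$; $\xi\ge\theta$ means $\lim_\xi\mathcal{F}\subset\lim_\theta\mathcal{F}$ for all $\mathcal{F}$. Hausdorff: each filter has at most one limit. Vicinity filter $\mathcal{V}_\xi(x)$: intersection of filters converging to $x$; pretopology: $x\in\lim_\xi\mathcal{V}_\xi(x)$ for all $x$. $\mathrm{T}\xi$: topology of $\xi$-open sets ($O$ with $\lim_\xi\mathcal{F}\cap O\ne\emptyset\Rightarrow O\in\mathcal{F}$). $x\in\lim_{\mathrm{I}_1\xi}\mathcal{F}$ iff some countably based $\mathcal{H}\le\mathcal{F}$ has $x\in\lim_\xi\mathcal{H}$; countable character: $\xi=\mathrm{I}_1\xi$. The product $\xi\times\tau$ is the convergence on $|\xi|\times|\tau|$ in which a filter converges to $(x,y)$ iff its projections converge to $x$ and $y$. For a convergence $\xi$, $\mathrm{Epi}_{\mathrm{I}_1}\xi$ is the coarsest convergence $\theta$ on $|\xi|$ such that $\mathrm{T}(\xi\times\tau)=\mathrm{T}(\theta\times\tau)$ for every convergence $\tau$ of countable character; equivalently, $\theta\ge\mathrm{Epi}_{\mathrm{I}_1}\xi$ iff $\theta\times\tau\ge\mathrm{T}(\xi\times\tau)$ for every prime metrizable topology $\tau$ (a topology is prime if it has at most one non-isolated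 point). One has $\xi\ge\mathrm{Epi}_{\mathrm{I}_1}\xi\ge\mathrm{T}\xi$. $\xi$ is strongly sequential if $\xi\ge\mathrm{Epi}_{\mathrm{I}_1}\mathrm{I}_1\xi$. $\xi$ has countable $\mathrm{S}_0$-character if some pretopology $\sigma$ of countable character satisfies $\sigma\ge\xi\ge\mathrm{T}\sigma$, and is strongly countably $\mathrm{S}_0$-characterized if some pretopology $\sigma$ of countable character satisfies $\sigma\ge\xi\ge\mathrm{Epi}_{\mathrm{I}_1}\sigma$. *)

From Stdlib Require Import Classical.
Set Implicit Arguments.

Record filter (X : Type) := Filter {
  fsets :> (X -> Prop) -> Prop;
  f_full : fsets (fun _ => True);
  f_up : forall A B : X -> Prop, (forall x, A x -> B x) -> fsets A -> fsets B;
  f_meet : forall A B : X -> Prop, fsets A -> fsets B -> fsets (fun x => A x /\ B x);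
  f_proper : ~ fsets (fun _ => False)
}.

Definition fle (X : Type) (F G : filter X) : Prop := forall A, F A -> G A.

Definition principal (X : Type) (x : X) : filter X.
Proof.
  refine (@Filter X (fun A => A x) _ _ _ _); simpl; auto.
Defined.

Definition fmap (X Y : Type) (f : X -> Y) (F : filter X) : filter Y.
Proof.
  refine (@Filter Y (fun A => F (fun z => A (f z))) _ _ _ _).
  - apply f_full.
  - intros A B HAB HA. apply (f_up F (fun z => A (f z))); auto.
  - intros A B HA HB. apply (f_meet F _ _ HA HB).
  - apply f_proper.
Defined.

Definition countably_based (X : Type) (H : filter X) : Prop :=
  exists B : nat -> X -> Prop,
    (forall n, H (B n)) /\
    (forall A, H A -> exists n, forall x, B n x -> A x).

Record convergence (X : Type) := Convergence {
  lim : filter X -> X -> Prop;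
  lim_iso : forall (F G : filter X) x, fle F G -> lim F x -> lim G x;
  lim_centered : forall x, lim (principal x) x
}.

Definition finer (X : Type) (xi theta : convergence X) : Prop :=
  forall F x, lim xi F x -> lim theta F x.

Definition same_conv (X : Type) (xi theta : convergence X) : Prop :=
  forall F x, lim xi F x <-> lim theta F x.

Definition hausdorff (X : Type) (xi : convergence X) : Prop :=
  forall F x y, lim xi F x -> lim xi F y -> x = y.

Definition vicinity (X : Type) (xi : convergence X) (x : X) : filter X.
Proof.
  refine (@Filter X (fun A => forall F, lim xi F x -> F A) _ _ _ _).
  - intros F _. apply f_full.
  - intros A B HAB HA F HF. exact (f_up F A B HAB (HA F HF)).
  - intros A B HA HB F HF. exact (f_meet F _ _ (HA F HF) (HB F HF)).
  - intros H. exact (H (principal x) (lim_centered xi x)).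
Defined.

Definition pretopology (X : Type) (xi : convergence X) : Prop :=
  forall x, lim xi (vicinity xi x) x.

Definition is_open (X : Type) (xi : convergence X) (O : X -> Prop) : Prop :=
  forall F x, lim xi F x -> O x -> F O.

Definition Tmod (X : Type) (xi : convergence X) : convergence X.
Proof.
  refine (@Convergence X (fun F x => forall O, is_open xi O -> O x -> F O) _ _).
  - intros F G x HFG H O HO Ox. exact (HFG O (H O HO Ox)).
  - intros x O _ Ox. exact Ox.
Defined.

Definition I1 (X : Type) (xi : convergence X) : convergence X.
Proof.
  refine (@Convergence X
    (fun F x => exists H : filter X, countably_based H /\ fle H F /\ lim xi H x) _ _).
  - intros F G x HFG [H [Hc [HHF Hl]]]. exists H; split; [|split]; auto.
    intros A HA; exact (HFG A (HHF A HA)).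
  - intros x. exists (principal x); split; [|split].
    + exists (fun _ z => z = x). split.
      * intros n. simpl. reflexivity.
      * intros A HA. exists 0. intros z ->. exact HA.
    + intros A HA; exact HA.
    + apply lim_centered.
Defined.

Definition countable_character (X : Type) (xi : convergence X) : Prop :=
  same_conv xi (I1 xi).

Definition prod_conv (X Y : Type) (xi : convergence X) (tau : convergence Y)
  : convergence (X * Y).
Proof.
  refine (@Convergence (X * Y)
    (fun F p => lim xi (fmap fst F) (fst p) /\ lim tau (fmap snd F) (snd p)) _ _).
  - intros F G p HFG [H1 H2]. split.
    + apply (@lim_iso _ xi (fmap fst F)); auto. intros A HA; exact (HFG _ HA).
    + apply (@lim_iso _ tau (fmap snd F)); auto. intros A HA; exact (HFG _ HA).
  - intros [x y]. split.
    + apply (@lim_iso _ xi (principal x)); [|apply lim_centered]. intros A HA; exact HA.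
    + apply (@lim_iso _ tau (principal y)); [|apply lim_centered]. intros A HA; exact HA.
Defined.

(** T(xi x tau) = T(theta x tau): same open sets *)
Definition same_topology (Z : Type) (a b : convergence Z) : Prop :=
  forall O, is_open a O <-> is_open b O.

Definition epi_I1_class (X : Type) (xi theta : convergence X) : Prop :=
  forall (Y : Type) (tau : convergence Y), countable_character tau ->
    same_topology (prod_conv xi tau) (prod_conv theta tau).

(** Epi_{I_1} xi: the coarsest convergence of that class, i.e. the infimum
    (pointwise union of limits) of the class. *)
Definition Epi_I1 (X : Type) (xi : convergence X) : convergence X.
Proof.
  refine (@Convergence X
    (fun F x => exists theta : convergence X, epi_I1_class xi theta /\ lim theta F x) _ _).
  - intros F G x HFG [th [Hc Hl]]. exists th; split; auto.
    exact (@lim_iso _ th F G x HFG Hl).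
  - intros x. exists xi; split; [|apply lim_centered].
    intros Y tau _ O; tauto.
Defined.

Definition strongly_sequential (X : Type) (xi : convergence X) : Prop :=
  finer xi (Epi_I1 (I1 xi)).

Definition countable_S0_character (X : Type) (xi : convergence X) : Prop :=
  exists sigma : convergence X,
    pretopology sigma /\ countable_character sigma /\
    finer sigma xi /\ finer xi (Tmod sigma).

Definition strongly_countably_S0_characterized (X : Type) (xi : convergence X) : Prop :=
  exists sigma : convergence X,
    pretopology sigma /\ countable_character sigma /\
    finer sigma xi /\ finer xi (Epi_I1 sigma).

From Stdlib Require Import Classical ClassicalEpsilon Lia.
Set Implicit Arguments.
Unset Strict Implicit.

(* If sigma >= xi >= T sigma, with sigma a pretopology of countable character
   and xi Hausdorff, then for every tau of countable character the products
   sigma x tau and (I_1 xi) x tau have the same open sets; hence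
   Epi_{I_1} sigma = Epi_{I_1} (I_1 xi), and both implications follow (the
   forward one using Epi_{I_1} sigma >= T sigma).

   The nontrivial inclusion is sequential.  Let a_n -> x in xi and b_n -> y in
   tau with (a_n, b_n) outside a sigma x tau-open set O containing (x, y).
   The set V of those z with (z, y) in O, (z, b_n) in O eventually, and z not
   among the a_n different from x, is sigma-open: sigma-convergent sequences
   escaping V would contradict openness of O, or, when they are eventually
   constant, Hausdorffness.  As x is in V and xi >= T sigma, eventually
   a_n is in V, so a_n = x and (a_n, b_n) = (x, b_n) is in O. *)

Definition tail_filter (X : Type) (s : nat -> X) : filter X.
Proof.
  refine (@Filter X (fun A => exists N, forall n, N <= n -> A (s n)) _ _ _ _).
  - exists 0; auto.
  - intros A B HAB [N HN]; exists N; auto.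
  - intros A B [N1 H1] [N2 H2]; exists (max N1 N2); intros n Hn; split;
      [apply H1 | apply H2]; lia.
  - intros [N HN]; exact (HN N (le_n N)).
Defined.

Lemma lim_tail_subseq (X : Type) (xi : convergence X) (s : nat -> X)
    (g : nat -> nat) (x : X) :
  (forall n, n <= g n) -> lim xi (tail_filter s) x ->
  lim xi (tail_filter (fun n => s (g n))) x.
Proof.
  intros Hg. apply lim_iso. intros A [N HN]. exists N.
  intros n Hn. apply HN. specialize (Hg n). lia.
Qed.

Lemma lim_tail_const (X : Type) (xi : convergence X) (x : X) :
  lim xi (tail_filter (fun _ => x)) x.
Proof.
  apply (lim_iso xi x (F := principal x)); [|apply lim_centered].
  intros A HA. exists 0. auto.
Qed.

Lemma prod_open_eventually (X Y : Type) (xi : convergence X)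
    (tau : convergence Y) (O : X * Y -> Prop) (c : nat -> X) (d : nat -> Y)
    (x : X) (y : Y) :
  is_open (prod_conv xi tau) O ->
  lim xi (tail_filter c) x -> lim tau (tail_filter d) y -> O (x, y) ->
  exists N, forall n, N <= n -> O (c n, d n).
Proof.
  intros HO Hc Hd. exact (HO (tail_filter (fun n => (c n, d n))) (x, y) (conj Hc Hd)).
Qed.

Record decreasing_base (X : Type) (H : filter X) (D : nat -> X -> Prop) : Prop := {
  base_mem : forall n, H (D n);
  base_antitone : forall n m z, n <= m -> D m z -> D n z;
  base_refines : forall A, H A -> exists n, forall z, D n z -> A z
}.

Fixpoint meet_upto (X : Type) (B : nat -> X -> Prop) (n : nat) : X -> Prop :=
  match n with
  | 0 => B 0
  | S k => fun z => meet_upto B k z /\ B (S k) z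
  end.

Lemma countably_based_decreasing_base (X : Type) (H : filter X) :
  countably_based H -> exists D, decreasing_base H D.
Proof.
  intros [B [HB Hbase]]. exists (meet_upto B). split.
  - induction n as [|n IH]; simpl; [apply HB | apply f_meet; auto].
  - intros n m z Hnm. induction Hnm as [|m _ IH]; simpl; tauto.
  - intros A HA. destruct (Hbase A HA) as [n Hn]. exists n.
    intros z Hz. apply Hn. destruct n; simpl in Hz; tauto.
Qed.

Lemma decreasing_base_tail (X : Type) (H : filter X) (D : nat -> X -> Prop)
    (s : nat -> X) :
  decreasing_base H D -> (forall n, D n (s n)) -> fle H (tail_filter s).
Proof.
  intros HD Hs A HA. destruct (base_refines HD HA) as [N HN]. exists N.
  intros n Hn. apply HN. exact (base_antitone HD Hn (Hs n)).
Qed.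

Lemma lim_seq_avoiding (X : Type) (xi : convergence X) (H : filter X) (x : X)
    (A : X -> Prop) :
  countably_based H -> lim xi H x -> ~ H A ->
  exists s, lim xi (tail_filter s) x /\ forall n, ~ A (s n).
Proof.
  intros Hcb Hl HA. destruct (countably_based_decreasing_base Hcb) as [D HD].
  assert (Hs : forall n, exists z, D n z /\ ~ A z).
  { intros n. apply NNPP; intro Hn. apply HA.
    apply (f_up H (D n)); [|apply (base_mem HD)].
    intros z Dz. apply NNPP; intro Az. apply Hn; eauto. }
  destruct (choice _ Hs) as [s Hs']. exists s. split.
  - exact (lim_iso xi x (decreasing_base_tail HD (fun n => proj1 (Hs' n))) Hl).
  - intros n; apply Hs'.
Qed.

Lemma frequent_value_of_bounded (m : nat -> nat) (j N : nat) :
  (forall k, N <= k -> m k < j) -> exists i, forall M, exists k, M <= k /\ m k = i.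
Proof.
  revert N. induction j as [|j IH]; intros N Hm.
  - specialize (Hm N (le_n N)). lia.
  - destruct (classic (forall M, exists k, M <= k /\ m k = j)) as [Hj|Hj]; [eauto|].
    apply not_all_ex_not in Hj as [M HM].
    apply (IH (max N M)). intros k Hk.
    assert (m k <> j) by (intro e; apply HM; exists k; split; [lia | exact e]).
    specialize (Hm k ltac:(lia)). lia.
Qed.

Lemma nat_seq_dichotomy (m : nat -> nat) :
  (exists g, forall j, j <= g j /\ j <= m (g j)) \/
  (exists i g, forall j, j <= g j /\ m (g j) = i).
Proof.
  destruct (classic (forall j, exists k, j <= k /\ j <= m k)) as [Hu|Hb].
  - left. exact (choice _ Hu).
  - right. apply not_all_ex_not in Hb as [j Hj].
    destruct (@frequent_value_of_bounded m j j) as [i Hi].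
    { intros k Hk. apply NNPP; intro. apply Hj. exists k. lia. }
    destruct (choice _ Hi) as [g Hg]. eauto.
Qed.

Lemma open_prod_of_finer (X Y : Type) (a b : convergence X) (tau : convergence Y)
    (O : X * Y -> Prop) :
  finer a b -> is_open (prod_conv b tau) O -> is_open (prod_conv a tau) O.
Proof. intros Hab HO F p [H1 H2]. apply HO. split; auto. Qed.

Lemma finer_I1 (X : Type) (sigma xi : convergence X) :
  countable_character sigma -> finer sigma xi -> finer sigma (I1 xi).
Proof.
  intros Hc Hf F x Hl. destruct (proj1 (Hc _ _) Hl) as [H [Hb [HF Hl']]].
  exists H; auto.
Qed.

Lemma finer_Epi_I1 (X : Type) (a b : convergence X) :
  (forall (Y : Type) (tau : convergence Y), countable_character tau ->
     same_topology (prod_conv a tau) (prod_conv b tau)) ->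
  finer (Epi_I1 a) (Epi_I1 b).
Proof.
  intros Hab F x [th [Hth Hl]]. exists th. split; [|exact Hl].
  intros Y tau Htau O. rewrite <- (Hab Y tau Htau O). exact (Hth Y tau Htau O).
Qed.

Definition indiscrete_unit : convergence unit.
Proof. refine (@Convergence unit (fun _ _ => True) _ _); auto. Defined.

Lemma indiscrete_unit_countable_character : countable_character indiscrete_unit.
Proof.
  intros F x; split; intros _; [|exact I].
  exists (principal tt). split; [|split; [|exact I]].
  - exists (fun _ z => z = tt). split; [reflexivity|].
    intros A HA. exists 0. intros z ->. exact HA.
  - intros A HA. apply (f_up F (fun _ => True)); [|apply f_full].
    intros [] _; exact HA.
Qed.

Lemma Epi_I1_finer_Tmod (X : Type) (sigma : convergence X) :
  finer (Epi_I1 sigma) (Tmod sigma).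
Proof.
  intros F x [th [Hth Hl]] O HO Ox.
  assert (HO' : is_open (prod_conv sigma indiscrete_unit) (fun p => O (fst p))).
  { intros G p [Hp _]. exact (HO _ _ Hp). }
  apply (proj1 (Hth _ _ indiscrete_unit_countable_character _)) in HO'.
  apply (HO' (fmap (fun z => (z, tt)) F) (x, tt)); [|exact Ox].
  split; [apply (lim_iso th x (F := F)); [intros A HA; exact HA | exact Hl] | exact I].
Qed.

Section CountableS0.

Variables (X : Type) (xi sigma : convergence X).
Hypotheses (xi_hausdorff : hausdorff xi) (sigma_pretopology : pretopology sigma)
  (sigma_countable : countable_character sigma) (sigma_finer : finer sigma xi)
  (xi_finer_Tmod : finer xi (Tmod sigma)).

Section ProductOpen.

Variables (Y : Type) (tau : convergence Y) (O : X * Y -> Prop).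
Hypothesis O_open : is_open (prod_conv sigma tau) O.

Section EscapingSequence.

Variables (a : nat -> X) (b : nat -> Y) (x : X) (y : Y).
Hypotheses (a_lim : lim xi (tail_filter a) x) (b_lim : lim tau (tail_filter b) y)
  (ab_out : forall n, ~ O (a n, b n)).

Let U (z : X) : Prop := O (z, y) /\ exists N, forall n, N <= n -> O (z, b n).
Let A (z : X) : Prop := exists n, z = a n /\ a n <> x.
Let V (z : X) : Prop := U z /\ ~ A z.

Lemma U_mem_lim (W : filter X) (z : X) :
  countably_based W -> lim sigma W z -> U z -> W U.
Proof.
  intros Hcb HW [Hzy _]. apply NNPP; intro HnU.
  destruct (lim_seq_avoiding Hcb HW HnU) as [c [Hc HcU]].
  destruct (prod_open_eventually O_open Hc (lim_tail_const tau y) Hzy) as [N HN].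
  assert (Hq : forall j, exists kn : nat * nat,
             j <= fst kn /\ fst kn <= snd kn /\ ~ O (c (fst kn), b (snd kn))).
  { intros j. pose (k := max j N).
    destruct (classic (exists n, k <= n /\ ~ O (c k, b n))) as [[n [Hkn Hn]]|Hn].
    - exists (k, n). simpl. split; [lia | auto].
    - exfalso. apply (HcU k). split; [apply HN; lia|]. exists k.
      intros n Hkn. apply NNPP; intro. apply Hn; eauto. }
  destruct (choice _ Hq) as [q Hq'].
  assert (Hc' : lim sigma (tail_filter (fun j => c (fst (q j)))) z).
  { apply lim_tail_subseq; [apply Hq' | exact Hc]. }
  assert (Hb' : lim tau (tail_filter (fun j => b (snd (q j)))) y).
  { apply lim_tail_subseq; [intros j; destruct (Hq' j); lia | exact b_lim]. }
  destruct (prod_open_eventually O_open Hc' Hb' Hzy) as [M HM].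
  exact (proj2 (proj2 (Hq' M)) (HM M (le_n M))).
Qed.

Lemma not_A_mem_lim (W : filter X) (z : X) :
  countably_based W -> lim sigma W z -> V z -> W (fun w => ~ A w).
Proof.
  intros Hcb HW [[Hzy _] HzA]. apply NNPP; intro HnA.
  destruct (lim_seq_avoiding Hcb HW HnA) as [c [Hc HcA]].
  assert (Hm : forall k, exists n, c k = a n /\ a n <> x)
    by (intros k; exact (NNPP _ (HcA k))).
  destruct (choice _ Hm) as [m Hm'].
  destruct (nat_seq_dichotomy m) as [[g Hg]|[i [g Hg]]].
  - (* along g, (a_{m k}, b_{m k}) -> (z, y) in sigma x tau *)
    assert (Hc' : lim sigma (tail_filter (fun j => c (g j))) z).
    { apply lim_tail_subseq; [apply Hg | exact Hc]. }
    assert (Hb' : lim tau (tail_filter (fun j => b (m (g j)))) y).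
    { apply lim_tail_subseq; [apply Hg | exact b_lim]. }
    destruct (prod_open_eventually O_open Hc' Hb' Hzy) as [N HN].
    apply (@ab_out (m (g N))). rewrite <- (proj1 (Hm' (g N))). exact (HN N (le_n N)).
  - (* a_i recurs along g, so {a_i}^up converges to z *)
    assert (Hi : lim sigma (principal (a i)) z).
    { apply (lim_iso sigma z (F := tail_filter (fun j => c (g j)))).
      - intros B [N HN]. specialize (HN N (le_n N)). simpl in HN.
        rewrite (proj1 (Hm' (g N))), (proj2 (Hg N)) in HN. exact HN.
      - apply lim_tail_subseq; [apply Hg | exact Hc]. }
    pose proof (xi_hausdorff (sigma_finer Hi) (lim_centered xi (a i))) as ->.
    apply HzA. exists i. split; [reflexivity|].
    rewrite <- (proj2 (Hg 0)). apply Hm'.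
Qed.

Lemma V_open : is_open sigma V.
Proof.
  intros G z HG Vz.
  destruct (proj1 (sigma_countable _ _) (sigma_pretopology z)) as [W [Hcb [HWV HWz]]].
  assert (HW : W V).
  { apply f_meet; [apply (U_mem_lim Hcb HWz), Vz | apply (not_A_mem_lim Hcb HWz Vz)]. }
  exact (HWV V HW G HG).
Qed.

Lemma escaping_sequence_limit_out : ~ O (x, y).
Proof.
  intros Hxy.
  assert (Ux : U x).
  { split; [exact Hxy|].
    exact (prod_open_eventually O_open (lim_tail_const sigma x) b_lim Hxy). }
  assert (Vx : V x) by (split; [exact Ux | intros [n [-> Hn]]; auto]).
  destruct (xi_finer_Tmod a_lim V_open Vx) as [N HN].
  destruct Ux as [_ [M HM]].
  destruct (HN (N + M) ltac:(lia)) as [_ HnA].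
  assert (e : a (N + M) = x) by (apply NNPP; intro ne; apply HnA; exists (N + M); auto).
  apply (@ab_out (N + M)). rewrite e. apply HM. lia.
Qed.

End EscapingSequence.

Lemma prod_open_I1 :
  countable_character tau -> is_open (prod_conv (I1 xi) tau) O.
Proof.
  intros Htau F [x y] [Hx Hy] Oxy. simpl in Hx, Hy.
  destruct Hx as [H [Hcb [HF Hx]]].
  destruct (proj1 (Htau _ _) Hy) as [K [Hkb [HK Hy']]].
  destruct (countably_based_decreasing_base Hcb) as [DA HDA].
  destruct (countably_based_decreasing_base Hkb) as [DB HDB].
  apply NNPP; intro HnF.
  assert (Hp : forall n, exists p : X * Y, DA n (fst p) /\ DB n (snd p) /\ ~ O p).
  { intros n. apply NNPP; intro Hno. apply HnF.
    apply (f_up F (fun p => DA n (fst p) /\ DB n (snd p))).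
    - intros p Hp. apply NNPP; intro. apply Hno. exists p; tauto.
    - apply f_meet; [apply HF, (base_mem HDA) | apply HK, (base_mem HDB)]. }
  destruct (choice _ Hp) as [p Hp'].
  apply (@escaping_sequence_limit_out (fun n => fst (p n)) (fun n => snd (p n)) x y).
  - exact (lim_iso xi x (decreasing_base_tail HDA (fun n => proj1 (Hp' n))) Hx).
  - exact (lim_iso tau y (decreasing_base_tail HDB (fun n => proj1 (proj2 (Hp' n)))) Hy').
  - intros n. rewrite <- surjective_pairing. apply Hp'.
  - exact Oxy.
Qed.

End ProductOpen.

Lemma same_prod_topology_I1 (Y : Type) (tau : convergence Y) :
  countable_character tau -> same_topology (prod_conv sigma tau) (prod_conv (I1 xi) tau).
Proof.
  intros Htau O. split.
  - intros HO. exact (prod_open_I1 HO Htau).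
  - apply open_prod_of_finer, finer_I1; assumption.
Qed.

Lemma Epi_I1_sigma_I1 :
  finer (Epi_I1 sigma) (Epi_I1 (I1 xi)) /\ finer (Epi_I1 (I1 xi)) (Epi_I1 sigma).
Proof.
  split; apply finer_Epi_I1; intros Y tau Htau O;
    [|symmetry]; apply same_prod_topology_I1; assumption.
Qed.

End CountableS0.

Theorem proposition5p4 (X : Type) (xi : convergence X) :
  hausdorff xi ->
  (strongly_countably_S0_characterized xi <->
   countable_S0_character xi /\ strongly_sequential xi).
Proof.
  intros Hh. split.
  - intros [s [Hp [Hc [Hsx Hxe]]]].
    assert (Hxt : finer xi (Tmod s)).
    { intros F x Hl. apply Epi_I1_finer_Tmod, Hxe, Hl. }
    split.
    + exists s. exact (conj Hp (conj Hc (conj Hsx Hxt))).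
    + intros F x Hl. apply (proj1 (Epi_I1_sigma_I1 Hh Hp Hc Hsx Hxt)), Hxe, Hl.
  - intros [[s [Hp [Hc [Hsx Hxt]]]] Hss].
    exists s. refine (conj Hp (conj Hc (conj Hsx _))).
    intros F x Hl. apply (proj2 (Epi_I1_sigma_I1 Hh Hp Hc Hsx Hxt)), Hss, Hl.
Qed.
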